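(* There exists $N$ such that the following holds for all $n\ge N$. Let $G$ be a graph with vertex set $\{v_1,\dots,v_n\}$, let $0\le k\le\frac1{20}\sqrt n$, write $G_i=G-v_i$ and $s_t=\sum_{i=1}^{n-k}d_t(G_i)$, and $d_t=d_t(G)$. Let $t$ be an integer with $0\le t\le\frac{2n}{3}-1$ and suppose $d_{t+1}\le\sqrt n$. Define $d_t'=\frac{1}{n-1-t}\bigl(s_t-(t+1)d_{t+1}\bigr)$. Then $d_t\ge d_t'$; moreover, if $d_t\le2\sqrt n$ then $d_t-d_t'<\frac12$ (so $d_t$ is the integer nearest to $d_t'$), and if $d_t>2\sqrt n$ then $d_t'\ge\frac12 d_t>\sqrt n$.
   Context: All graphs are finite, simple and undirected. For a graph $G'$ and integer $t$, $d_t(G')$ is the number of vertices of degree $t$ in $G'$. For $v\in V(G)$, $G-v$ is obtained by deleting $v$ and its incident edges. *)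

From mathcomp Require Import all_boot all_order all_algebra.
Set Implicit Arguments. Unset Strict Implicit. Unset Printing Implicit Defensive.

(* A simple graph on a finite type T is a symmetric irreflexive relation e.
   The graph induced on the vertex set V : {set T}: *)

Definition deg_in (T : finType) (V : {set T}) (e : rel T) (u : T) : nat :=
  #|[set w in V | e u w]|.

Definition dcount (T : finType) (V : {set T}) (e : rel T) (t : nat) : nat :=
  #|[set u in V | deg_in V e u == t]|.

Definition dG (T : finType) (e : rel T) (t : nat) : nat := dcount [set: T] e t.

Definition dGdel (T : finType) (e : rel T) (v : T) (t : nat) : nat :=
  dcount ([set: T] :\ v) e t.

(* s_t = sum_{i=1}^{n-k} d_t(G - v_i), vertices v_1..v_n being 0..n-1 *)
Definition s_sum (n : nat) (e : rel 'I_n) (k t : nat) : nat :=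
  \sum_(i < n | (i < n - k)%N) dGdel e i t.

From mathcomp Require Import all_boot all_order all_algebra.
From mathcomp Require Import zify ring lra.
Import Order.TTheory GRing.Theory Num.Theory.
Set Implicit Arguments. Unset Strict Implicit. Unset Printing Implicit Defensive.

(* Deleting v lowers the degree of each neighbour by one, so a vertex u has
   degree t in G - v iff either deg u = t and v is not in u's closed
   neighbourhood (n - 1 - t choices of v), or deg u = t + 1 and v is a
   neighbour of u (t + 1 choices).  Double counting gives the exact identity
   sum_v d_t(G - v) = (n - 1 - t) d_t + (t + 1) d_(t+1).  Each d_t(G - v) is at
   most d_t + d_(t+1), so omitting the last k <= sqrt(n)/20 terms from s_t
   changes the identity by at most k (d_t + d_(t+1)), which the hypotheses on
   d_t, d_(t+1) and t make smaller than (n - 1 - t)/2, resp. (n - 1 - t) d_t/2. *)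

Lemma card_set_nat (T : finType) (P : pred T) : #|[set x | P x]| = \sum_x P x.
Proof. by rewrite -sum1dep_card big_mkcond; apply: eq_bigr => x _; case: (P x). Qed.

Section DeletedDegrees.

Variables (T : finType) (e : rel T).
Hypothesis e_irr : irreflexive e.

Local Notation deg := (deg_in [set: T] e).

Lemma deg_in_setD1 u v : deg_in ([set: T] :\ v) e u + e u v = deg u.
Proof.
rewrite /deg_in (cardsD1 v [set w in [set: T] | e u w]) addnC !inE /=.
by congr (_ + _); apply: eq_card => w; rewrite !inE; case: (w == v).
Qed.

Lemma card_deletions_deg u t :
  #|[set v | (u != v) && (deg_in ([set: T] :\ v) e u == t)]| =
  (deg u == t) * (#|T| - 1 - t) + (deg u == t.+1) * t.+1.
Proof.
set N := [set w | e u w].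
have degE : deg u = #|N| by apply: eq_card => w; rewrite !inE.
have uN : u \notin N by rewrite inE e_irr.
have memE v : (u != v) && (deg_in ([set: T] :\ v) e u == t) =
    ((#|N| == t) && (v \notin u |: N)) || ((#|N| == t.+1) && (v \in N)).
  have := deg_in_setD1 u v; rewrite degE.
  case: (eqVneq u v) => [<- _|nuv]; first by rewrite setU11 (negbTE uN) !andbF.
  rewrite !inE (eq_sym v u) (negbTE nuv) /=.
  by case: (e u v) => /= ?; rewrite ?andbT ?andbF ?orbF; do 2! case: eqP; lia.
rewrite degE; case: (eqVneq #|N| t) => [Nt|Nt].
- have -> : [set v | (u != v) && (deg_in ([set: T] :\ v) e u == t)] = ~: (u |: N).
    by apply/setP => v; rewrite !inE memE Nt eqxx ltn_eqF //= orbF !inE.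
  have := cardsC (u |: N); rewrite cardsU1 uN Nt; case: eqP; lia.
- have -> : [set v | (u != v) && (deg_in ([set: T] :\ v) e u == t)] =
            if #|N| == t.+1 then N else set0.
    by apply/setP => v; rewrite !inE memE (negbTE Nt); case: ifP; rewrite ?inE.
  by case: (eqVneq #|N| t.+1) => [->|_]; rewrite ?cards0 /=; lia.
Qed.

Lemma sum_dGdel t : \sum_v dGdel e v t = (#|T| - 1 - t) * dG e t + t.+1 * dG e t.+1.
Proof.
have dGE r : dG e r = \sum_u (deg u == r).
  by rewrite /dG /dcount card_set_nat; apply: eq_bigr => u _; rewrite in_setT.
rewrite dGE dGE !big_distrr -big_split /= /dGdel /dcount.
under eq_bigr => v _ do rewrite card_set_nat.
rewrite exchange_big; apply: eq_bigr => u _ /=.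
rewrite mulnC [_ * (_ == _)]mulnC -card_deletions_deg card_set_nat.
by apply: eq_bigr => v _; rewrite !inE andbT eq_sym.
Qed.

Lemma dGdel_le v t : dGdel e v t <= dG e t + dG e t.+1.
Proof.
apply: leq_trans (leq_card_setU _ _); apply: subset_leq_card.
apply/subsetP => u; rewrite !inE andbT => /andP[_ /eqP <-].
by rewrite -(deg_in_setD1 u v); case: (e u v); rewrite ?addn0 ?addn1 eqxx ?orbT.
Qed.

Lemma sum_dGdel_bounds (S : {set T}) t :
  let s := \sum_(v in S) dGdel e v t in
  s <= (#|T| - 1 - t) * dG e t + t.+1 * dG e t.+1 <=
    s + #|~: S| * (dG e t + dG e t.+1).
Proof.
rewrite /= -sum_dGdel (bigID (mem S) predT) /= leq_addr leq_add2l /=.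
rewrite (eq_bigl (mem (~: S))) => [|v]; last by rewrite !inE.
by rewrite -sum_nat_const leq_sum // => v _; apply: dGdel_le.
Qed.

End DeletedDegrees.

Section ApproxError.
Local Open Scope ring_scope.

Lemma approx_error (R : realFieldType) (s a b c E D : R) : 0 < D ->
  s <= D * a + c * b <= s + E -> 0 <= a - (s - c * b) / D <= E / D.
Proof.
move=> D_gt0 /andP[lo hi].
have -> : a - (s - c * b) / D = (D * a + c * b - s) / D by field; rewrite gt_eqF.
apply/andP; split; first by apply: divr_ge0; lra.
by rewrite ler_pM2r ?invr_gt0 //; lra.
Qed.

End ApproxError.

Lemma card_notin_prefix n k : #|~: [set i : 'I_n | i < n - k]| <= k.
Proof.
have -> : ~: [set i : 'I_n | i < n - k] = [set i : 'I_n | n - k <= i].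
  by apply/setP => i; rewrite !inE -leqNgt.
have sum_geq m p : \sum_(i < p) (m <= i) = p - m.
  elim: p => [|p IHp]; first by rewrite big_ord0.
  by rewrite big_ord_recr /= IHp; case: leqP => /=; lia.
rewrite card_set_nat sum_geq; lia.
Qed.

Lemma leq_mul_of_sq (x y z : nat) : x ^ 2 * y ^ 2 <= z ^ 2 -> x * y <= z.
Proof. by rewrite -expnMn leq_exp2r. Qed.

Lemma small_deletion_error n K a b D : 400 * K ^ 2 <= n -> b ^ 2 <= n ->
  a ^ 2 <= 4 * n -> n <= 3 * D -> 0 < D -> 2 * (K * (a + b)) < D.
Proof.
move=> hK hb ha hnD D_gt0.
have Kb : 20 * K * b <= n.
  by apply: leq_mul_of_sq; rewrite expnMn -[n ^ 2]mulnn leq_mul.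
have Ka : 10 * K * a <= n.
  apply: leq_mul_of_sq; have := leq_mul hK ha; rewrite !expnMn -[n ^ 2]mulnn; lia.
lia.
Qed.

Lemma large_deletion_error n K a b D : 400 * K ^ 2 <= n -> b ^ 2 <= n ->
  4 * n < a ^ 2 -> n <= 3 * D -> 2 * (K * (a + b)) <= D * a.
Proof.
move=> hK hb ha hnD.
have ba : b <= a by rewrite -(leq_exp2r _ _ (isT : 0 < 2)); lia.
have K20 : 20 * K <= n.
  apply: leq_mul_of_sq; apply: leq_trans hK _.
  by case: n {hb ha hnD} => // n; nia.
have := leq_mul K20 (leqnn a); have := leq_mul hnD (leqnn a).
have := leq_mul (leqnn K) ba; lia.
Qed.

Theorem mainTheorem7 :
  exists N : nat, forall n : nat, (N <= n)%N ->
  forall (e : rel 'I_n), symmetric e -> irreflexive e ->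
  forall k t : nat,
    (400 * k ^ 2 <= n)%N ->
    (3 * (t + 1) <= 2 * n)%N ->
    (dG e t.+1 ^ 2 <= n)%N ->
    let dt := dG e t in
    let dt' : rat :=
      (((s_sum e k t)%:R - (t + 1)%:R * (dG e t.+1)%:R) / (n - 1 - t)%:R)%R in
    (dt'  <= dt%:R)%R /\
    ((dt ^ 2 <= 4 * n)%N -> (dt%:R - dt' < 1 / 2)%R) /\
    ((4 * n < dt ^ 2)%N ->
       (dt%:R / 2 <= dt')%R /\ (n%:R < (dt%:R / 2) ^+ 2 :> rat)%R).
Proof.
exists 0 => n _ e _ e_irr k t hk ht hb dt dt'.
set S := [set i : 'I_n | i < n - k].
have sE : s_sum e k t = \sum_(v in S) dGdel e v t.
  by apply: eq_bigl => i; rewrite inE.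
have hK : 400 * #|~: S| ^ 2 <= n.
  by apply: leq_trans hk; rewrite leq_mul2l leq_exp2r ?card_notin_prefix.
have := sum_dGdel_bounds e_irr S t; rewrite -sE card_ord.
move: hK hb; rewrite /dt' /dt addn1.
set K := #|~: S|; set s := s_sum e k t; set a := dG e t; set b := dG e t.+1.
set D := n - 1 - t => hK hb bounds.
have hnD : n <= 3 * D by lia.
have D_gt0 : 0 < D by lia.
have D_gtR : (0 < D%:R :> rat)%R by rewrite ltr0n.
have boundsR : ((s%:R : rat) <= D%:R * a%:R + t.+1%:R * b%:R <=
                (s%:R : rat) + (K * (a + b))%:R)%R.
  by rewrite -!natrM -!natrD !ler_nat.
have /andP[err_ge0 err_le] := approx_error D_gtR boundsR.
split; first lra.
split=> [ha | ha].
- have := small_deletion_error hK hb ha hnD D_gt0.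
  rewrite -(ltr_nat rat) natrM => small.
  have : ((K * (a + b))%:R / D%:R < 1 / 2 :> rat)%R by rewrite ltr_pdivrMr //; lra.
  lra.
- have := large_deletion_error hK hb ha hnD.
  rewrite -(ler_nat rat) !natrM => large.
  have : ((K * (a + b))%:R / D%:R <= a%:R / 2 :> rat)%R by rewrite ler_pdivrMr //; lra.
  move: ha; rewrite -(ltr_nat rat) natrM natrX expr_div_n; lra.
Qed.
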